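(* Let $\Gamma\triangleright W$ be a well-formed CCCP configuration and $c$ a channel, and let $\mathit{eureka},\mathit{fail}$ be channels that do not occur free in $W$ and are idle in $\Gamma$; let $\mathit{arb},\mathit{no}$ be closed values with $\delta_{\mathit{arb}}=\delta_{\mathit{no}}=1$. Define $T_{\iota(c)}=([\mathrm{exp}(c)]\,\mathbf 0,\ \mathit{eureka}!\langle\mathit{arb}\rangle.\mathbf 0)+\mathit{fail}!\langle\mathit{no}\rangle.\mathbf 0$ (a conditional whose then-branch is $\mathbf 0$ and else-branch is $\mathit{eureka}!\langle\mathit{arb}\rangle.\mathbf 0$, in choice with $\mathit{fail}!\langle\mathit{no}\rangle.\mathbf 0$) and $T^{\checkmark}_{\iota(c)}=\sigma.\mathit{eureka}!\langle\mathit{arb}\rangle.\mathbf 0$. Then $\Gamma\triangleright W\overset{\iota(c)}{\Rightarrow}\Gamma'\triangleright W'$ if and only if $\Gamma\triangleright W|T_{\iota(c)}\to_i^*\Gamma'\triangleright W'|T^{\checkmark}_{\iota(c)}$.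
   Context: CCCP syntax. Fix a set of channels (ranged over by $c,d$) and a set of values containing data variables $x,y$ and a special error value $\mathtt{err}$; closed values $v,w$ contain no variables, and each closed value $v$ has a transmission time $\delta_v\in\mathbb{N}$ with $\delta_v\ge 1$. Expressions $e$ are built from values; closed expressions evaluate to closed values via $[\![e]\!]$. Station code (processes) is given by $P,Q ::= c!\langle e\rangle.P \mid \lfloor ?c(x).P\rfloor Q \mid \sigma.P \mid \tau.P \mid P+Q \mid [b]P,Q \mid X \mid \mathbf{0} \mid \mathrm{fix}\,X.P$, where $b$ is either $e_1=e_2$ or $\mathrm{exp}(c)$, $[b]P,Q$ is a conditional (then-branch $P$, else-branch $Q$), $\lfloor ?c(x).P\rfloor Q$ is a receiver on $c$ with timeout branch $Q$ ($x$ bound in $P$), $\sigma.P$ is a one-unit delay and $\sigma^n.P$ denotes $n$ nested delays. System terms are $W ::= P \mid \lfloor ?c(x).P\rfloor \mid W_1|W_2 \mid \nu c{:}(n,v).W$, where $\lfloor ?c(x).P\rfloor$ is an active receiver ($x$ bound in $P$) and $\nu c{:}(n,v).W$ restricts $c$ with local channel state $(n,v)$. In $\mathrm{fix}\,X.P$ every occurrence of $X$ in $P$ is guarded, i.e. lies within a broadcast prefix, a receiver continuation, a timeout branch, a $\sigma$-prefix, or a branch of a conditional. Terms are identified up to $\alpha$-conversion. A channel environment is a map $\Gamma$ from channels to $\mathbb{N}\times$(closed values); write $\Gamma\vdash_t c:n$ and $\Gamma\vdash_v c:w$ when $\Gamma(c)=(n,w)$; $c$ is idle in $\Gamma$ if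 $\Gamma\vdash_t c:0$ and exposed otherwise; $\Gamma[c\mapsto(n,v)]$ is $\Gamma$ updated at $c$; $\Gamma\le\Gamma'$ iff for every $c$, $\Gamma\vdash_t c:n$ and $\Gamma'\vdash_t c:m$ imply $n\le m$. A configuration $\Gamma\triangleright W$ is a channel environment together with a closed system term (no free data or process variables). Intensional semantics. Actions $\lambda$ are $c!v$, $c?v$, $\sigma$, $\tau$. The environment update $\lambda(\Gamma)$ is: $\sigma(\Gamma)(c)=(\max(n-1,0),w)$ whenever $\Gamma(c)=(n,w)$; $c!v(\Gamma)$ agrees with $\Gamma$ except at $c$, where it is $(\delta_v,v)$ if $c$ is idle in $\Gamma$ and $(\max(\delta_v,n),\mathtt{err})$ if $\Gamma\vdash_t c:n>0$; $c?v(\Gamma)=c!v(\Gamma)$; $\tau(\Gamma)=\Gamma$. The predicate $\mathrm{rcv}(W,c)$ on terms is: true for $\lfloor ?d(x).P\rfloor Q$ iff $d=c$; $\mathrm{rcv}(P+Q,c)=\mathrm{rcv}(P,c)\vee\mathrm{rcv}(Q,c)$; $\mathrm{rcv}(\mathrm{fix}\,X.P,c)=\mathrm{rcv}(P,c)$; $\mathrm{rcv}(W_1|W_2,c)=\mathrm{rcv}(W_1,c)\vee\mathrm{rcv}(W_2,c)$; $\mathrm{rcv}(\nu d{:}(n,v).W,c)=\mathrm{rcv}(W,c)$ (with $d\neq c$ by $\alpha$-conversion); false for all other forms (broadcasts, $\tau.P$, $\sigma.P$, conditionals, $X$, $\mathbf 0$, active receivers). Then $\mathrm{rcv}(\Gamma\triangleright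 W,c)$ holds iff $c$ is idle in $\Gamma$ and $\mathrm{rcv}(W,c)$. Transitions $\Gamma\triangleright W\xrightarrow{\lambda}W'$ are the least relation closed under: (Snd) $[\![e]\!]=v$ implies $\Gamma\triangleright c!\langle e\rangle.P\xrightarrow{c!v}\sigma^{\delta_v}.P$; (Rcv) $c$ idle in $\Gamma$ implies $\Gamma\triangleright\lfloor ?c(x).P\rfloor Q\xrightarrow{c?v}\lfloor ?c(x).P\rfloor$; (RcvIgn) $\neg\mathrm{rcv}(\Gamma\triangleright W,c)$ implies $\Gamma\triangleright W\xrightarrow{c?v}W$; (Sync) $\Gamma\triangleright W_1\xrightarrow{c!v}W_1'$ and $\Gamma\triangleright W_2\xrightarrow{c?v}W_2'$ imply $\Gamma\triangleright W_1|W_2\xrightarrow{c!v}W_1'|W_2'$, and symmetrically; (RcvPar) $\Gamma\triangleright W_i\xrightarrow{c?v}W_i'$ for $i=1,2$ imply $\Gamma\triangleright W_1|W_2\xrightarrow{c?v}W_1'|W_2'$; (TimeNil) $\Gamma\triangleright\mathbf 0\xrightarrow{\sigma}\mathbf 0$; (Sleep) $\Gamma\triangleright\sigma.P\xrightarrow{\sigma}P$; (ActRcv) $\Gamma\vdash_t c:n$, $n>1$ imply $\Gamma\triangleright\lfloor ?c(x).P\rfloor\xrightarrow{\sigma}\lfloor ?c(x).P\rfloor$; (EndRcv) $\Gamma\vdash_t c:1$, $\Gamma\vdash_v c:w$ imply $\Gamma\triangleright\lfloor ?c(x).P\rfloor\xrightarrow{\sigma}\{w/x\}P$; (Timeout)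 $c$ idle in $\Gamma$ implies $\Gamma\triangleright\lfloor ?c(x).P\rfloor Q\xrightarrow{\sigma}Q$; (RcvLate) $c$ exposed in $\Gamma$ implies $\Gamma\triangleright\lfloor ?c(x).P\rfloor Q\xrightarrow{\tau}\lfloor ?c(x).\{\mathtt{err}/x\}P\rfloor$; (Tau) $\Gamma\triangleright\tau.P\xrightarrow{\tau}P$; (Then)/(Else) $\Gamma\triangleright[b]P,Q\xrightarrow{\tau}\sigma.P$ if $[\![b]\!]_\Gamma$ is true and $\xrightarrow{\tau}\sigma.Q$ otherwise, where $[\![e_1=e_2]\!]_\Gamma$ is true iff $[\![e_1]\!]=[\![e_2]\!]$ and $[\![\mathrm{exp}(c)]\!]_\Gamma$ is true iff $c$ is exposed in $\Gamma$; (TimePar) $\Gamma\triangleright W_i\xrightarrow{\sigma}W_i'$ for $i=1,2$ imply $\Gamma\triangleright W_1|W_2\xrightarrow{\sigma}W_1'|W_2'$; (TauPar) $\Gamma\triangleright W_1\xrightarrow{\tau}W_1'$ implies $\Gamma\triangleright W_1|W_2\xrightarrow{\tau}W_1'|W_2$, and symmetrically; (Rec) $\Gamma\triangleright\{\mathrm{fix}\,X.P/X\}P\xrightarrow{\lambda}W$ implies $\Gamma\triangleright\mathrm{fix}\,X.P\xrightarrow{\lambda}W$; (Sum) for $\lambda\in\{\tau,c!v\}$, $\Gamma\triangleright P\xrightarrow{\lambda}W$ implies $\Gamma\triangleright P+Q\xrightarrow{\lambda}W$, and symmetrically; (SumTime) $\Gamma\triangleright P\xrightarrow{\sigma}P'$,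 $\Gamma\triangleright Q\xrightarrow{\sigma}Q'$ imply $\Gamma\triangleright P+Q\xrightarrow{\sigma}P'+Q'$; (SumRcv) $\Gamma\triangleright P\xrightarrow{c?v}W$ and $\mathrm{rcv}(\Gamma\triangleright P,c)$ imply $\Gamma\triangleright P+Q\xrightarrow{c?v}W$, and symmetrically; (ResI) $\Gamma[c\mapsto(n,v)]\triangleright W\xrightarrow{c!w}W'$ implies $\Gamma\triangleright\nu c{:}(n,v).W\xrightarrow{\tau}\nu c{:}(c!w(\Gamma[c\mapsto(n,v)]))(c).W'$; (ResV) $\Gamma[c\mapsto(n,v)]\triangleright W\xrightarrow{\lambda}W'$ with $c$ not occurring in $\lambda$ implies $\Gamma\triangleright\nu c{:}(n,v).W\xrightarrow{\lambda}\nu c{:}(\lambda(\Gamma[c\mapsto(n,v)]))(c).W'$. Reductions. $\Gamma\triangleright W\to\Gamma'\triangleright W'$ iff $\Gamma\triangleright W\xrightarrow{\lambda}W'$ for some $\lambda\in\{c!v,\sigma,\tau\}$ and $\Gamma'=\lambda(\Gamma)$; it is instantaneous ($\to_i$) if $\lambda\neq\sigma$ and timed ($\to_\sigma$) if $\lambda=\sigma$. Extensional semantics. Extensional actions $\alpha\in\{c?v,\sigma,\tau,\gamma(c,v),\iota(c)\}$ between configurations are given by: (Input) $\Gamma\triangleright W\xrightarrow{c?v}W'$ implies $\Gamma\triangleright W\overset{c?v}{\rightarrowtail}c?v(\Gamma)\triangleright W'$; (Time) $\Gamma\triangleright W\xrightarrow{\sigma}W'$ implies $\Gamma\triangleright W\overset{\sigma}{\rightarrowtail}\sigma(\Gamma)\triangleright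 W'$; (Shh) $\Gamma\triangleright W\xrightarrow{c!v}W'$ implies $\Gamma\triangleright W\overset{\tau}{\rightarrowtail}c!v(\Gamma)\triangleright W'$; (TauExt) $\Gamma\triangleright W\xrightarrow{\tau}W'$ implies $\Gamma\triangleright W\overset{\tau}{\rightarrowtail}\Gamma\triangleright W'$; (Deliver) $\Gamma(c)=(1,v)$ and $\Gamma\triangleright W\xrightarrow{\sigma}W'$ imply $\Gamma\triangleright W\overset{\gamma(c,v)}{\rightarrowtail}\sigma(\Gamma)\triangleright W'$; (Idle) $c$ idle in $\Gamma$ implies $\Gamma\triangleright W\overset{\iota(c)}{\rightarrowtail}\Gamma\triangleright W$. Weak actions: $\Rightarrow$ is the reflexive-transitive closure of $\overset{\tau}{\rightarrowtail}$; $\overset{\alpha}{\Rightarrow}$ is $\Rightarrow\overset{\alpha}{\rightarrowtail}\Rightarrow$. Well-formedness. The set of well-formed configurations is the least set such that: $\Gamma\triangleright P$ is well-formed for every closed process $P$; $\Gamma\triangleright\lfloor ?c(x).P\rfloor$ is well-formed whenever $c$ is exposed in $\Gamma$; $\Gamma\triangleright W_1|W_2$ is well-formed whenever $\Gamma\triangleright W_1$ and $\Gamma\triangleright W_2$ are; $\Gamma\triangleright\nu c{:}(n,v).W$ is well-formed whenever $\Gamma[c\mapsto(n,v)]\triangleright W$ is. *)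

(* Syntax and semantics of CCCP.
   - closed values: an abstract type [val] with an error value [err] and a
     transmission-time function [delta];
   - data variables and process variables: de Bruijn indices;
   - channels: locally nameless (free names [CF a], a : nat; bound [CB i]),
     so that terms are identified up to alpha-conversion syntactically. *)
From Stdlib Require Import List Arith Relations.
Import ListNotations.

Set Implicit Arguments.

Inductive ch := CF (a : nat) | CB (i : nat).

Section CCCP.
Variable val : Type.
Variable err : val.
Variable delta : val -> nat.

Inductive expr :=
| EVal (v : val)
| EVar (i : nat)
| EUn (f : val -> val) (e : expr)
| EBin (f : val -> val -> val) (e1 e2 : expr).

Inductive bexp :=
| BEq (e1 e2 : expr)
| BExp (c : ch).

(* One syntactic category for processes and system terms; [is_proc]
   singles out station code. *)
Inductive term :=
| Snd (c : ch) (e : expr) (P : term)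
| Rcv (c : ch) (P : term) (Q : term)        (* |_?c(x).P_|Q, x = data index 0 in P *)
| Sig (P : term)
| Tau (P : term)
| Sum (P Q : term)
| Cond (b : bexp) (P Q : term)
| PVar (i : nat)
| Nil
| Fix (P : term)                            (* fix X.P, X = process index 0 *)
| ARcv (c : ch) (P : term)
| Par (W1 W2 : term)
| Nu (n : nat) (v : val) (W : term).        (* nu c:(n,v).W, c = channel index 0 *)

Fixpoint is_proc (W : term) : Prop :=
  match W with
  | Snd _ _ P => is_proc P
  | Rcv _ P Q => is_proc P /\ is_proc Q
  | Sig P | Tau P | Fix P => is_proc P
  | Sum P Q | Cond _ P Q => is_proc P /\ is_proc Q
  | PVar _ | Nil => True
  | ARcv _ _ | Par _ _ | Nu _ _ _ => False
  end.

Fixpoint sig_n (n : nat) (P : term) : term :=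
  match n with 0 => P | S m => Sig (sig_n m P) end.

Fixpoint eclosed (d : nat) (e : expr) : Prop :=
  match e with
  | EVal _ => True
  | EVar i => i < d
  | EUn _ e => eclosed d e
  | EBin _ e1 e2 => eclosed d e1 /\ eclosed d e2
  end.

Definition chclosed (k : nat) (c : ch) : Prop :=
  match c with CF _ => True | CB i => i < k end.

Definition bclosed (d k : nat) (b : bexp) : Prop :=
  match b with
  | BEq e1 e2 => eclosed d e1 /\ eclosed d e2
  | BExp c => chclosed k c
  end.

Fixpoint closedAt (d p k : nat) (W : term) : Prop :=
  match W with
  | Snd c e P => chclosed k c /\ eclosed d e /\ closedAt d p k P
  | Rcv c P Q => chclosed k c /\ closedAt (S d) p k P /\ closedAt d p k Q
  | Sig P | Tau P => closedAt d p k P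
  | Sum P Q => closedAt d p k P /\ closedAt d p k Q
  | Cond b P Q => bclosed d k b /\ closedAt d p k P /\ closedAt d p k Q
  | PVar i => i < p
  | Nil => True
  | Fix P => closedAt d (S p) k P
  | ARcv c P => chclosed k c /\ closedAt (S d) p k P
  | Par W1 W2 => closedAt d p k W1 /\ closedAt d p k W2
  | Nu _ _ W => closedAt d p (S k) W
  end.

Fixpoint guarded (k : nat) (P : term) : Prop :=
  match P with
  | Snd _ _ _ | Rcv _ _ _ | Sig _ | Cond _ _ _ | ARcv _ _ | Nil => True
  | Tau Q => guarded k Q
  | Sum Q R | Par Q R => guarded k Q /\ guarded k R
  | PVar i => i <> k
  | Fix Q => guarded (S k) Q
  | Nu _ _ Q => guarded k Q
  end.

Fixpoint allguarded (P : term) : Prop :=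
  match P with
  | Snd _ _ Q | Sig Q | Tau Q | ARcv _ Q | Nu _ _ Q => allguarded Q
  | Rcv _ Q R | Sum Q R | Cond _ Q R | Par Q R => allguarded Q /\ allguarded R
  | PVar _ | Nil => True
  | Fix Q => guarded 0 Q /\ allguarded Q
  end.

Definition chfv (c : ch) : list nat := match c with CF a => [a] | CB _ => [] end.
Definition bfv (b : bexp) : list nat := match b with BEq _ _ => [] | BExp c => chfv c end.

Fixpoint fvc (W : term) : list nat :=
  match W with
  | Snd c _ P => chfv c ++ fvc P
  | Rcv c P Q => chfv c ++ fvc P ++ fvc Q
  | Sig P | Tau P | Fix P => fvc P
  | Sum P Q | Par P Q => fvc P ++ fvc Q
  | Cond b P Q => bfv b ++ fvc P ++ fvc Q
  | PVar _ | Nil => []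
  | ARcv c P => chfv c ++ fvc P
  | Nu _ _ W => fvc W
  end.

(* ---- substitutions (only ever applied to closed substituends) ---- *)
Fixpoint substE (k : nat) (w : val) (e : expr) : expr :=
  match e with
  | EVal v => EVal v
  | EVar i => if i <? k then EVar i else if i =? k then EVal w else EVar (pred i)
  | EUn f e => EUn f (substE k w e)
  | EBin f e1 e2 => EBin f (substE k w e1) (substE k w e2)
  end.

Definition substB (k : nat) (w : val) (b : bexp) : bexp :=
  match b with BEq e1 e2 => BEq (substE k w e1) (substE k w e2) | BExp c => BExp c end.

Fixpoint substD (k : nat) (w : val) (W : term) : term :=
  match W with
  | Snd c e P => Snd c (substE k w e) (substD k w P)
  | Rcv c P Q => Rcv c (substD (S k) w P) (substD k w Q)
  | Sig P => Sig (substD k w P)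
  | Tau P => Tau (substD k w P)
  | Sum P Q => Sum (substD k w P) (substD k w Q)
  | Cond b P Q => Cond (substB k w b) (substD k w P) (substD k w Q)
  | PVar i => PVar i
  | Nil => Nil
  | Fix P => Fix (substD k w P)
  | ARcv c P => ARcv c (substD (S k) w P)
  | Par P Q => Par (substD k w P) (substD k w Q)
  | Nu n v P => Nu n v (substD k w P)
  end.

(* {R/X}W, X = process index k; R is closed (no lifting needed) *)
Fixpoint substP (k : nat) (R : term) (W : term) : term :=
  match W with
  | Snd c e P => Snd c e (substP k R P)
  | Rcv c P Q => Rcv c (substP k R P) (substP k R Q)
  | Sig P => Sig (substP k R P)
  | Tau P => Tau (substP k R P)
  | Sum P Q => Sum (substP k R P) (substP k R Q)
  | Cond b P Q => Cond b (substP k R P) (substP k R Q)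
  | PVar i => if i <? k then PVar i else if i =? k then R else PVar (pred i)
  | Nil => Nil
  | Fix P => Fix (substP (S k) R P)
  | ARcv c P => ARcv c (substP k R P)
  | Par P Q => Par (substP k R P) (substP k R Q)
  | Nu n v P => Nu n v (substP k R P)
  end.

Definition openC (k a : nat) (c : ch) : ch :=
  match c with CB i => if i =? k then CF a else CB i | CF b => CF b end.
Definition closeC (k a : nat) (c : ch) : ch :=
  match c with CF b => if b =? a then CB k else CF b | CB i => CB i end.
Definition mapB (f : ch -> ch) (b : bexp) : bexp :=
  match b with BEq e1 e2 => BEq e1 e2 | BExp c => BExp (f c) end.

Fixpoint mapCh (f : nat -> ch -> ch) (k : nat) (W : term) : term :=
  match W with
  | Snd c e P => Snd (f k c) e (mapCh f k P)
  | Rcv c P Q => Rcv (f k c) (mapCh f k P) (mapCh f k Q)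
  | Sig P => Sig (mapCh f k P)
  | Tau P => Tau (mapCh f k P)
  | Sum P Q => Sum (mapCh f k P) (mapCh f k Q)
  | Cond b P Q => Cond (mapB (f k) b) (mapCh f k P) (mapCh f k Q)
  | PVar i => PVar i
  | Nil => Nil
  | Fix P => Fix (mapCh f k P)
  | ARcv c P => ARcv (f k c) (mapCh f k P)
  | Par P Q => Par (mapCh f k P) (mapCh f k Q)
  | Nu n v P => Nu n v (mapCh f (S k) P)
  end.

Definition openT (a : nat) (W : term) : term := mapCh (fun k => openC k a) 0 W.
Definition closeT (a : nat) (W : term) : term := mapCh (fun k => closeC k a) 0 W.

Definition env := nat -> (nat * val)%type.
Definition idle (G : env) (c : nat) : Prop := fst (G c) = 0.
Definition exposed (G : env) (c : nat) : Prop := fst (G c) <> 0.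
Definition upd (G : env) (c : nat) (p : nat * val) : env :=
  fun d => if d =? c then p else G d.

Inductive act := AOut (c : nat) (v : val) | AIn (c : nat) (v : val) | Sigma | TauA.

Definition bcast_upd (G : env) (c : nat) (v : val) : env :=
  upd G c (if fst (G c) =? 0 then (delta v, v) else (max (delta v) (fst (G c)), err)).

Definition act_upd (l : act) (G : env) : env :=
  match l with
  | Sigma => fun c => (pred (fst (G c)), snd (G c))
  | AOut c v => bcast_upd G c v
  | AIn c v => bcast_upd G c v
  | TauA => G
  end.

Definition act_mentions (l : act) (a : nat) : Prop :=
  match l with AOut c _ | AIn c _ => c = a | _ => False end.

Fixpoint eval (e : expr) : option val :=
  match e with
  | EVal v => Some v
  | EVar _ => None
  | EUn f e => option_map f (eval e)
  | EBin f e1 e2 =>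
      match eval e1, eval e2 with Some v1, Some v2 => Some (f v1 v2) | _, _ => None end
  end.

Definition bholds (G : env) (b : bexp) : Prop :=
  match b with
  | BEq e1 e2 => eval e1 = eval e2
  | BExp (CF c) => exposed G c
  | BExp (CB _) => False
  end.

Fixpoint rcv (W : term) (c : nat) : Prop :=
  match W with
  | Rcv d _ _ => d = CF c
  | Sum P Q => rcv P c \/ rcv Q c
  | Fix P => rcv P c
  | Par W1 W2 => rcv W1 c \/ rcv W2 c
  | Nu _ _ W => rcv W c
  | _ => False
  end.

Definition rcvC (G : env) (W : term) (c : nat) : Prop := idle G c /\ rcv W c.

Inductive trans : env -> term -> act -> term -> Prop :=
| t_snd G c e v P : eval e = Some v ->
    trans G (Snd (CF c) e P) (AOut c v) (sig_n (delta v) P)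
| t_rcv G c v P Q : idle G c ->
    trans G (Rcv (CF c) P Q) (AIn c v) (ARcv (CF c) P)
| t_rcvign G W c v : ~ rcvC G W c -> trans G W (AIn c v) W
| t_syncL G W1 W2 W1' W2' c v : trans G W1 (AOut c v) W1' -> trans G W2 (AIn c v) W2' ->
    trans G (Par W1 W2) (AOut c v) (Par W1' W2')
| t_syncR G W1 W2 W1' W2' c v : trans G W1 (AIn c v) W1' -> trans G W2 (AOut c v) W2' ->
    trans G (Par W1 W2) (AOut c v) (Par W1' W2')
| t_rcvpar G W1 W2 W1' W2' c v : trans G W1 (AIn c v) W1' -> trans G W2 (AIn c v) W2' ->
    trans G (Par W1 W2) (AIn c v) (Par W1' W2')
| t_timenil G : trans G Nil Sigma Nil
| t_sleep G P : trans G (Sig P) Sigma P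
| t_actrcv G c P : 1 < fst (G c) -> trans G (ARcv (CF c) P) Sigma (ARcv (CF c) P)
| t_endrcv G c w P : G c = (1, w) -> trans G (ARcv (CF c) P) Sigma (substD 0 w P)
| t_timeout G c P Q : idle G c -> trans G (Rcv (CF c) P Q) Sigma Q
| t_rcvlate G c P Q : exposed G c ->
    trans G (Rcv (CF c) P Q) TauA (ARcv (CF c) (substD 0 err P))
| t_tau G P : trans G (Tau P) TauA P
| t_then G b P Q : bholds G b -> trans G (Cond b P Q) TauA (Sig P)
| t_else G b P Q : ~ bholds G b -> trans G (Cond b P Q) TauA (Sig Q)
| t_timepar G W1 W2 W1' W2' : trans G W1 Sigma W1' -> trans G W2 Sigma W2' ->
    trans G (Par W1 W2) Sigma (Par W1' W2')
| t_tauparL G W1 W2 W1' : trans G W1 TauA W1' -> trans G (Par W1 W2) TauA (Par W1' W2)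
| t_tauparR G W1 W2 W2' : trans G W2 TauA W2' -> trans G (Par W1 W2) TauA (Par W1 W2')
| t_rec G P l W : trans G (substP 0 (Fix P) P) l W -> trans G (Fix P) l W
| t_sumL G P Q l W : (l = TauA \/ exists c v, l = AOut c v) ->
    trans G P l W -> trans G (Sum P Q) l W
| t_sumR G P Q l W : (l = TauA \/ exists c v, l = AOut c v) ->
    trans G Q l W -> trans G (Sum P Q) l W
| t_sumtime G P Q P' Q' : trans G P Sigma P' -> trans G Q Sigma Q' ->
    trans G (Sum P Q) Sigma (Sum P' Q')
| t_sumrcvL G P Q c v W : trans G P (AIn c v) W -> rcvC G P c -> trans G (Sum P Q) (AIn c v) W
| t_sumrcvR G P Q c v W : trans G Q (AIn c v) W -> rcvC G Q c -> trans G (Sum P Q) (AIn c v) W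
| t_resI G n v W a w W' : ~ In a (fvc W) ->
    trans (upd G a (n, v)) (openT a W) (AOut a w) W' ->
    trans G (Nu n v W) TauA
      (Nu (fst (act_upd (AOut a w) (upd G a (n, v)) a))
          (snd (act_upd (AOut a w) (upd G a (n, v)) a)) (closeT a W'))
| t_resV G n v W a l W' : ~ In a (fvc W) -> ~ act_mentions l a ->
    trans (upd G a (n, v)) (openT a W) l W' ->
    trans G (Nu n v W) l
      (Nu (fst (act_upd l (upd G a (n, v)) a))
          (snd (act_upd l (upd G a (n, v)) a)) (closeT a W')).

Definition conf := (env * term)%type.

Definition red (x y : conf) : Prop :=
  exists l, (l = TauA \/ l = Sigma \/ exists c v, l = AOut c v) /\
    trans (fst x) (snd x) l (snd y) /\ fst y = act_upd l (fst x).

Definition red_i (x y : conf) : Prop :=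
  exists l, (l = TauA \/ exists c v, l = AOut c v) /\
    trans (fst x) (snd x) l (snd y) /\ fst y = act_upd l (fst x).

Definition red_i_star : conf -> conf -> Prop := clos_refl_trans conf red_i.

Inductive eact := EIn (c : nat) (v : val) | ESig | ETau | EGamma (c : nat) (v : val) | EIota (c : nat).

Inductive ext : conf -> eact -> conf -> Prop :=
| e_input G W W' c v : trans G W (AIn c v) W' -> ext (G, W) (EIn c v) (act_upd (AIn c v) G, W')
| e_time G W W' : trans G W Sigma W' -> ext (G, W) ESig (act_upd Sigma G, W')
| e_shh G W W' c v : trans G W (AOut c v) W' -> ext (G, W) ETau (act_upd (AOut c v) G, W')
| e_tau G W W' : trans G W TauA W' -> ext (G, W) ETau (G, W')
| e_deliver G W W' c v : G c = (1, v) -> trans G W Sigma W' ->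
    ext (G, W) (EGamma c v) (act_upd Sigma G, W')
| e_idle G W c : idle G c -> ext (G, W) (EIota c) (G, W).

Definition wtau : conf -> conf -> Prop := clos_refl_trans conf (fun x y => ext x ETau y).

Definition wext (x : conf) (al : eact) (y : conf) : Prop :=
  exists x1 x2, wtau x x1 /\ ext x1 al x2 /\ wtau x2 y.

Inductive wf : env -> term -> Prop :=
| wf_proc G P : is_proc P -> closedAt 0 0 0 P -> allguarded P -> wf G P
| wf_arcv G a P : is_proc P -> closedAt 1 0 0 P -> allguarded P -> exposed G a ->
    wf G (ARcv (CF a) P)
| wf_par G W1 W2 : wf G W1 -> wf G W2 -> wf G (Par W1 W2)
| wf_nu G n v W a : ~ In a (fvc W) -> wf (upd G a (n, v)) (openT a W) -> wf G (Nu n v W).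

Definition T_iota (c eureka fail : nat) (arb no : val) : term :=
  Sum (Cond (BExp (CF c)) Nil (Snd (CF eureka) (EVal arb) Nil))
      (Snd (CF fail) (EVal no) Nil).

Definition T_iota_ok (eureka : nat) (arb : val) : term :=
  Sig (Snd (CF eureka) (EVal arb) Nil).

End CCCP.

(* The tester never listens, so it ignores every broadcast of W and the moves of W
   lift verbatim to W | T.  Conversely, the only instantaneous moves of the tester
   itself are the then-branch of its conditional (to sigma.0), the else-branch,
   taken exactly when c is idle (to the success state), and the broadcast on fail
   (to sigma.0, as delta no = 1).  Both sigma.0 and the success state sigma.eureka!arb
   are inert under instantaneous reductions, so a run reaching W' | success state
   consists of tau-moves of W, one iota(c)-check, and further tau-moves of W. *)
From Stdlib Require Import List Relations Lia.

Set Implicit Arguments.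

Section Testing.
Variable val : Type.
Variable err : val.
Variable delta : val -> nat.

Local Notation trans := (trans err delta).
Local Notation red_i := (red_i err delta).
Local Notation red_i_star := (red_i_star err delta).
Local Notation ext := (ext err delta).
Local Notation wtau := (wtau err delta).

Definition instant (l : act val) : Prop := l = TauA val \/ exists c v, l = AOut c v.

Local Ltac absurd_instant Hl := destruct Hl as [? | (? & ? & ?)]; discriminate.

Definition deaf (R : term val) : Prop := forall c, ~ rcv R c.

Definition inert (R : term val) : Prop :=
  forall G l R', trans G R l R' -> l = Sigma val \/ (exists c v, l = AIn c v) /\ R' = R.

Lemma instant_ext_tau G W l W' :
  instant l -> trans G W l W' -> ext (G, W) (ETau val) (act_upd err delta l G, W').
Proof.
  intros [-> | (c & v & ->)] HW; [apply e_tau | apply e_shh]; exact HW.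
Qed.

Lemma ext_tau_red_i_par R x y :
  deaf R -> ext x (ETau val) y -> red_i (fst x, Par (snd x) R) (fst y, Par (snd y) R).
Proof.
  intros HR Hxy; inversion Hxy; subst.
  - exists (AOut c v); split; [right; eauto | split; [| reflexivity]].
    apply t_syncL; [assumption |].
    apply t_rcvign; intros [_ Hr]; exact (HR c Hr).
  - exists (TauA val); split; [left; reflexivity | split; [| reflexivity]].
    apply t_tauparL; assumption.
Qed.

Lemma wtau_red_i_star_par R x y :
  deaf R -> wtau x y -> red_i_star (fst x, Par (snd x) R) (fst y, Par (snd y) R).
Proof.
  intros HR Hxy; induction Hxy as [x y Hxy | x | x y z _ IHxy _ IHyz].
  - apply rt_step, ext_tau_red_i_par; assumption.
  - apply rt_refl.
  - eapply rt_trans; eassumption.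
Qed.

Lemma inert_sig P : inert (Sig P).
Proof.
  intros G l R' H; inversion H; subst; [right; eauto | left; reflexivity].
Qed.

Lemma trans_par_inert R G W l Z :
  inert R -> instant l -> trans G (Par W R) l Z ->
  exists W2, Z = Par W2 R /\ trans G W l W2.
Proof.
  intros HR Hl H; inversion H; subst; try absurd_instant Hl; try contradiction.
  3: eauto.
  all: match goal with HtR : trans _ ?r _ _ |- context [Par _ ?r] =>
         destruct (HR _ _ _ HtR) as [? | [(? & ? & ?) ->]] end;
    try discriminate; eauto.
Qed.

Lemma red_i_star_par_inert R G W G' Z :
  inert R -> red_i_star (G, Par W R) (G', Z) ->
  exists W', Z = Par W' R /\ wtau (G, W) (G', W').
Proof.
  intros HR H; apply clos_rt_rt1n in H.
  remember (G, Par W R) as x eqn:Hx in H; remember (G', Z) as z eqn:Hz in H.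
  revert G W Hx; induction H as [x | x [G1 Z1] z Hxy _ IH]; intros G W ->.
  - injection Hz as <- <-; exists W; split; [reflexivity | apply rt_refl].
  - destruct Hxy as (l & Hl & Ht & HG1); simpl in *; subst G1.
    destruct (trans_par_inert HR Hl Ht) as (W1 & -> & HW).
    destruct (IH Hz _ W1 eq_refl) as (W' & -> & HW').
    exists W'; split; [reflexivity |].
    eapply rt_trans; [apply rt_step, instant_ext_tau |]; eassumption.
Qed.

Section Tester.
Variables (c eureka fail : nat) (arb no : val).

Local Notation T := (T_iota c eureka fail arb no).
Local Notation T_ok := (T_iota_ok eureka arb).

Lemma deaf_T_iota : deaf T.
Proof. intros d [[] | []]. Qed.

Lemma deaf_T_iota_ok : deaf T_ok.
Proof. intros d []. Qed.

Lemma T_iota_else G : idle G c -> trans G T (TauA val) T_ok.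
Proof.
  intros Hc; apply t_sumL; [left; reflexivity |].
  apply t_else; simpl; unfold exposed; unfold idle in Hc; lia.
Qed.

Lemma T_iota_instant G l R :
  instant l -> trans G T l R ->
  R = Sig (Nil val) \/ (l = TauA val /\ idle G c /\ R = T_ok) \/
  R = sig_n (delta no) (Nil val).
Proof.
  intros Hl H; inversion H; subst.
  - absurd_instant Hl.
  - match goal with Hc : trans _ (Cond _ _ _) _ _ |- _ => inversion Hc; subst end.
    + absurd_instant Hl.
    + left; reflexivity.
    + right; left; repeat split.
      match goal with Hb : ~ bholds _ _ |- _ => simpl in Hb; unfold exposed in Hb end.
      unfold idle; lia.
  - match goal with Hs : trans _ (Snd _ _ _) _ _ |- _ => inversion Hs; subst end.
    + match goal with He : eval _ = Some _ |- _ => injection He as -> end; auto.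
    + absurd_instant Hl.
  - absurd_instant Hl.
  - match goal with Hr : rcvC _ _ _ |- _ => destruct Hr as [_ []] end.
  - match goal with Hr : rcvC _ _ _ |- _ => destruct Hr as [_ []] end.
Qed.

Lemma T_iota_ignores_input G d v R : trans G T (AIn d v) R -> R = T.
Proof.
  intros H; inversion H; subst; try reflexivity;
    match goal with
    | Hr : rcvC _ _ _ |- _ => destruct Hr as [_ []]
    | Hl : _ \/ _ |- _ => absurd_instant Hl
    end.
Qed.

Hypothesis delta_no : delta no = 1.

Lemma red_i_par_T_iota G W y :
  red_i (G, Par W T) y ->
  (exists W1, snd y = Par W1 T /\ ext (G, W) (ETau val) (fst y, W1)) \/
  (exists W1, snd y = Par W1 (Sig (Nil val))) \/
  (idle G c /\ y = (G, Par W T_ok)).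
Proof.
  destruct y as [G1 Z]; intros (l & Hl & Ht & HG1); simpl in *; subst G1.
  inversion Ht; subst.
  - absurd_instant Hl.
  - match goal with HT : trans _ T (AIn _ _) _ |- _ => rewrite (T_iota_ignores_input HT) end.
    left; exists W1'; split; [reflexivity |].
    apply instant_ext_tau; assumption.
  - right; left; exists W1'.
    match goal with HT : trans _ T _ _ |- _ =>
      destruct (T_iota_instant Hl HT) as [-> | [(? & _ & ->) | ->]] end;
      [reflexivity | discriminate | rewrite delta_no; reflexivity].
  - absurd_instant Hl.
  - absurd_instant Hl.
  - left; exists W1'; split; [reflexivity |].
    apply instant_ext_tau; assumption.
  - match goal with HT : trans _ T _ _ |- _ =>
      destruct (T_iota_instant Hl HT) as [-> | [(_ & Hc & ->) | ->]] end.
    + right; left; eexists; reflexivity.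
    + right; right; split; [assumption | reflexivity].
    + right; left; rewrite delta_no; eexists; reflexivity.
Qed.

Lemma red_i_star_T_iota_wext G W G' W' :
  red_i_star (G, Par W T) (G', Par W' T_ok) ->
  wext err delta (G, W) (EIota val c) (G', W').
Proof.
  intros H; apply clos_rt_rt1n in H.
  remember (G, Par W T) as x eqn:Hx in H; remember (G', Par W' T_ok) as z eqn:Hz in H.
  revert G W Hx; induction H as [x | x y z Hxy Hyz IH]; intros G W ->.
  - discriminate Hz.
  - subst z; apply clos_rt1n_rt in Hyz.
    destruct (red_i_par_T_iota Hxy) as [(W1 & Hy & HW) | [(W1 & Hy) | (Hc & ->)]].
    + destruct y as [G1 Z1]; simpl in Hy, HW; subst Z1.
      destruct (IH eq_refl G1 W1 eq_refl) as (x1 & x2 & H1 & H2 & H3).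
      exists x1, x2; split; [| split; assumption].
      eapply rt_trans; [apply rt_step |]; eassumption.
    + destruct y as [G1 Z1]; simpl in Hy; subst Z1.
      destruct (red_i_star_par_inert (@inert_sig _) Hyz) as (? & Heq & _).
      discriminate Heq.
    + destruct (red_i_star_par_inert (@inert_sig _) Hyz) as (W2 & Heq & HW).
      injection Heq as <-.
      exists (G, W), (G, W); repeat split; [apply rt_refl | apply e_idle | ]; assumption.
Qed.

Lemma wext_red_i_star_T_iota G W G' W' :
  wext err delta (G, W) (EIota val c) (G', W') ->
  red_i_star (G, Par W T) (G', Par W' T_ok).
Proof.
  intros ([G1 W1] & [G2 W2] & H1 & Hiota & H2).
  inversion Hiota; subst.
  eapply rt_trans; [exact (wtau_red_i_star_par deaf_T_iota H1) |].
  eapply rt_trans; [| exact (wtau_red_i_star_par deaf_T_iota_ok H2)].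
  apply rt_step; exists (TauA val); split; [left; reflexivity | split; [| reflexivity]].
  apply t_tauparR, T_iota_else; assumption.
Qed.

End Tester.
End Testing.

Theorem mainTheorem18 (val : Type) (err : val) (delta : val -> nat)
  (Hdelta : forall v, 1 <= delta v)
  (G : env val) (W : term val) (c eureka fail : nat) (arb no : val)
  (G' : env val) (W' : term val) :
  wf G W ->
  ~ In eureka (fvc W) -> ~ In fail (fvc W) ->
  idle G eureka -> idle G fail ->
  delta arb = 1 -> delta no = 1 ->
  (wext err delta (G, W) (EIota val c) (G', W') <->
   red_i_star err delta (G, Par W (T_iota c eureka fail arb no))
                        (G', Par W' (T_iota_ok eureka arb))).
Proof.
  intros _ _ _ _ _ _ Hno; split.
  - apply wext_red_i_star_T_iota.
  - apply red_i_star_T_iota_wext; assumption.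
Qed.
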